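(* Let $0/1 = p_0/q_0 \prec \cdots \prec p_{n+1}/q_{n+1} = 1/0$ be a sequence of slopes and let $\Sigma_0,\dots,\Sigma_{n+1}\subset\#^n\mathbb{C}P^2$ be the configuration of spheres built from it as described in the context. Then $\sum_{i=0}^{n+1}\Sigma_i\cdot\Sigma_i = 3n$.
   Context: Slopes: nonnegative rationals $p/q$ in lowest terms or $1/0$; $\Delta(p/q,r/s)=|ps-qr|$; $p/q\prec r/s$ means $p/q<r/s$ ($1/0$ largest) and $\Delta=1$. The configuration is built inductively: for $n=1$ (sequence $0/1\prec1/1\prec1/0$), $\Sigma_0,\Sigma_2$ are two complex lines in $\mathbb{C}P^2$ and $\Sigma_1$ a third complex line with reversed orientation; for $n>1$, pick $i$ with $p_{i-1}/q_{i-1}\prec p_{i+1}/q_{i+1}$, build the configuration for the sequence with $p_i/q_i$ removed, then blow up with a new copy of $\mathbb{C}P^2$ at the intersection point of the spheres for $p_{i-1}/q_{i-1}$ and $p_{i+1}/q_{i+1}$, replacing those by their transforms and adding as $\Sigma_i$ a complex line of the new summand with reversed orientation. The resulting spheres satisfy $\Sigma_i\cdot\Sigma_i=\Delta(p_{i-1}/q_{i-1},p_{i+1}/q_{i+1})$ with indices mod $n+2$. *)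

From mathcomp Require Import all_boot all_order all_algebra.
Set Implicit Arguments. Unset Strict Implicit. Unset Printing Implicit Defensive.
Import Order.TTheory GRing.Theory Num.Theory.
Local Open Scope ring_scope.

(* A slope p/q is a pair (p, q) of naturals in lowest terms; 1/0 is (1, 0). *)
Definition slope := (nat * nat)%type.
Definition is_slope (a : slope) : bool := coprime a.1 a.2.

Definition Delta (a b : slope) : nat :=
  absz ((a.1 * b.2)%:Z - (a.2 * b.1)%:Z).

(* p/q < r/s, with 1/0 the largest element (cross-multiplication). *)
Definition slope_lt (a b : slope) : bool := (a.1 * b.2 < b.1 * a.2)%N.

Definition prec (a b : slope) : bool := slope_lt a b && (Delta a b == 1%N).

(* Second homology of #^n CP^2 is Z^n (classes = seq int of length n, in the
   basis of complex lines of the summands) with intersection form the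
   standard diagonal form diag(1,...,1). *)
Definition iform (u v : seq int) : int := \sum_(k < size u) u`_k * v`_k.

(* [config s n cls]: cls (list of homology classes of Sigma_0..Sigma_{n+1},
   in H_2(#^n CP^2)) is a configuration obtained by the inductive
   construction from the slope sequence s. *)
Inductive config : seq slope -> nat -> seq (seq int) -> Prop :=
| config_base :
    config [:: (0%N, 1%N); (1%N, 1%N); (1%N, 0%N)] 1
           [:: [:: 1]; [:: -1]; [:: 1]]
| config_blowup (s : seq slope) (n : nat) (cls : seq (seq int))
    (i : nat) (r : slope) :
    config s n cls ->
    (0 < i < size s)%N ->
    is_slope r ->
    prec (nth (0%N, 0%N) s i.-1) r -> prec r (nth (0%N, 0%N) s i) ->
    (* new slope inserted at position i; new CP^2 summand is the last
       coordinate; e = class of its complex line.  The transforms of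
       Sigma_{i-1}, Sigma_{i+1} are A + e and B - e, the new sphere is -e;
       all other classes are unchanged (extended by 0). *)
    config (take i s ++ r :: drop i s) n.+1
      (take i.-1 [seq rcons c 0 | c <- cls] ++
         [:: rcons (nth [::] cls i.-1) 1;
             rcons (nseq n 0) (-1);
             rcons (nth [::] cls i) (-1)] ++
         drop i.+1 [seq rcons c 0 | c <- cls]).

From mathcomp Require Import all_boot all_order all_algebra.
From mathcomp Require Import zify ring.
Set Implicit Arguments. Unset Strict Implicit. Unset Printing Implicit Defensive.
Import Order.TTheory GRing.Theory Num.Theory.
Local Open Scope ring_scope.

(* Each blow-up appends the class e of a new line, orthogonal to all old
   classes and with e.e = 1.  The two neighbouring spheres become A + e and
   B - e and the new sphere is -e, so each of these three spheres gains
   exactly 1 in self-intersection while every other sphere keeps its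
   square.  Starting from the three lines of CP^2 (total 3), n - 1 blow-ups
   give total 3 + 3 (n - 1) = 3 n. *)

Definition total_self_intersection (cls : seq (seq int)) : int :=
  \sum_(c <- cls) iform c c.

Definition blowup_classes (n : nat) (cls : seq (seq int)) (i : nat) :
    seq (seq int) :=
  take i.-1 [seq rcons c 0 | c <- cls] ++
    [:: rcons (nth [::] cls i.-1) 1;
        rcons (nseq n 0) (-1);
        rcons (nth [::] cls i) (-1)] ++
    drop i.+1 [seq rcons c 0 | c <- cls].

Lemma iform_rcons (c : seq int) (x : int) :
  iform (rcons c x) (rcons c x) = iform c c + x * x.
Proof.
rewrite /iform size_rcons big_ord_recr /= !nth_rcons ltnn eqxx.
by congr (_ + _); apply: eq_bigr => k _; rewrite !nth_rcons ltn_ord.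
Qed.

Lemma iform_nseq0l (n : nat) (v : seq int) : iform (nseq n 0) v = 0.
Proof. by rewrite /iform big1 // => k _; rewrite nth_nseq if_same mul0r. Qed.

Lemma total_self_intersection_cat (cls1 cls2 : seq (seq int)) :
  total_self_intersection (cls1 ++ cls2) =
  total_self_intersection cls1 + total_self_intersection cls2.
Proof. exact: big_cat. Qed.

Lemma total_self_intersection_rcons0 (cls : seq (seq int)) :
  total_self_intersection [seq rcons c 0 | c <- cls] =
  total_self_intersection cls.
Proof.
by rewrite /total_self_intersection big_map; apply: eq_bigr => c _;
  rewrite iform_rcons mulr0 addr0.
Qed.

Section BlowUp.

Variables (n j : nat) (cls : seq (seq int)).
Hypothesis lt_j1_cls : (j.+1 < size cls)%N.

Lemma size_blowup_classes : size (blowup_classes n cls j.+1) = (size cls).+1.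
Proof.
rewrite /blowup_classes !size_cat /= size_take size_drop !size_map.
rewrite (ltn_trans _ lt_j1_cls) //; lia.
Qed.

Lemma total_self_intersection_blowup :
  total_self_intersection (blowup_classes n cls j.+1) =
  total_self_intersection cls + 3.
Proof.
have lt_j_cls : (j < size cls)%N by exact: ltnW.
have split_cls : cls = take j cls ++
    nth [::] cls j :: nth [::] cls j.+1 :: drop j.+2 cls.
  by rewrite -(drop_nth [::] lt_j1_cls) -(drop_nth [::] lt_j_cls) cat_take_drop.
rewrite {2}split_cls /blowup_classes -map_take -map_drop.
rewrite !total_self_intersection_cat !total_self_intersection_rcons0.
rewrite /total_self_intersection !big_cons big_nil !iform_rcons iform_nseq0l /=.
ring.
Qed.

End BlowUp.

Lemma config_size (s : seq slope) (n : nat) (cls : seq (seq int)) :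
  config s n cls -> size cls = size s /\ size s = n.+2.
Proof.
elim=> // {}s {}n {}cls [|j] r _ [size_cls size_s] /andP[//= _ lt_j1_s] _ _ _.
rewrite -[X in size X]/(blowup_classes n cls j.+1) size_blowup_classes;
  last by rewrite size_cls.
by rewrite size_cat /= size_take size_drop lt_j1_s size_cls size_s; lia.
Qed.

Lemma config_total_self_intersection (s : seq slope) (n : nat)
    (cls : seq (seq int)) :
  config s n cls -> total_self_intersection cls = (3 * n)%:Z.
Proof.
elim=> [|{}s {}n {}cls [|j] r cfg IH /andP[//= _ lt_j1_s] _ _ _].
  by rewrite /total_self_intersection !big_cons big_nil /iform /=
    !big_ord_recr !big_ord0.
have [size_cls _] := config_size cfg.
rewrite -[X in total_self_intersection X]/(blowup_classes n cls j.+1).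
by rewrite total_self_intersection_blowup ?size_cls // IH mulnSr PoszD.
Qed.

Theorem mainTheorem6 (n : nat) (s : seq slope) (cls : seq (seq int)) :
  size s = n.+2 ->
  all is_slope s ->
  nth (0%N, 0%N) s 0 = (0%N, 1%N) ->
  nth (0%N, 0%N) s n.+1 = (1%N, 0%N) ->
  (forall i : nat, (i <= n)%N -> prec (nth (0%N, 0%N) s i) (nth (0%N, 0%N) s i.+1)) ->
  config s n cls ->
  \sum_(i < n.+2) iform (nth [::] cls i) (nth [::] cls i) = (3 * n)%:Z.
Proof.
(* Only the homology classes matter. *)
move=> _ _ _ _ _ cfg.
have [size_cls size_s] := config_size cfg.
rewrite -(config_total_self_intersection cfg) /total_self_intersection.
by rewrite (big_nth [::]) big_mkord size_cls size_s.
Qed.
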